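(* The Banach spaces $ces_\infty$ and $\ell_\infty$ are not isomorphic.
   Context: $ces_\infty$ is the space of real sequences $a=(a_n)_{n\ge1}$ with $\|a\|=\sup_{n\ge1}\frac1n\sum_{k=1}^n|a_k|<\infty$. ''Isomorphic'' means linearly isomorphic as Banach spaces. *)

From HB Require Import structures.
From mathcomp Require Import all_boot all_order all_algebra.
From mathcomp Require Import all_classical all_reals.
Set Implicit Arguments. Unset Strict Implicit. Unset Printing Implicit Defensive.
Import Order.TTheory GRing.Theory Num.Theory.
Local Open Scope ring_scope.
Local Open Scope classical_set_scope.

(* Sequences are indexed from 0: a 0 corresponds to a_1 in the paper. *)

Definition ces_avg (R : realType) (a : nat -> R) (n : nat) : R :=
  (n.+1%:R)^-1 * \sum_(k < n.+1) `|a k|.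

Definition in_ces_infty (R : realType) (a : nat -> R) : Prop :=
  exists M : R, forall n, ces_avg a n <= M.

Definition ces_norm (R : realType) (a : nat -> R) : R :=
  sup (range (ces_avg a)).

Definition in_l_infty (R : realType) (a : nat -> R) : Prop :=
  exists M : R, forall n, `|a n| <= M.

Definition linf_norm (R : realType) (a : nat -> R) : R :=
  sup (range (fun n => `|a n|)).

(* T (defined on all sequences, only its restriction to ces_infty matters)
   is a linear isomorphism of Banach spaces from ces_infty onto l_infty:
   linear, bijective, bounded with bounded inverse. *)
Definition ces_linf_isomorphism (R : realType) (T : (nat -> R) -> (nat -> R))
  : Prop :=
  (forall a, in_ces_infty a -> in_l_infty (T a)) /\
      (forall a b, in_ces_infty a -> in_ces_infty b ->
          T (fun n => a n + b n) = (fun n => T a n + T b n)) /\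
      (forall (r : R) a, in_ces_infty a ->
          T (fun n => r * a n) = (fun n => r * T a n)) /\
      (forall a b, in_ces_infty a -> in_ces_infty b -> T a = T b -> a = b) /\
      (forall y, in_l_infty y -> exists2 a, in_ces_infty a & T a = y) /\
    (exists c C : R, 0 < c /\ 0 < C /\
        forall a, in_ces_infty a ->
          c * ces_norm a <= linf_norm (T a) /\ linf_norm (T a) <= C * ces_norm a).

(* Suppose T : ces_infty -> l_infty is an isomorphism with c ||a|| <= ||T a||
   <= C ||a||.  For i < N, the functionals t_i y := (T^-1 y)(N + i) / N form an
   operator l_infty -> l_1^N of norm at most 2 / c, because a Cesaro norm
   controls the average of |a| over the block [N, 2N).  The vectors
   u_i := T (N e_(N+i)) have sup norm at most C and satisfy t_i u_i = 1.
   Rounding the u_i to a finite grid reduces everything to finitely many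
   indicator sequences, on which Khintchine's inequality (with constant
   sqrt 3, from the second and fourth moments of Rademacher sums) yields
   N <= 12 C^2 (2 / c)^2; this fails for N large. *)

From mathcomp Require Import all_boot all_order all_algebra.
From mathcomp Require Import all_classical all_reals.
From mathcomp Require Import ring lra.

Set Implicit Arguments.
Unset Strict Implicit.
Unset Printing Implicit Defensive.
Import Order.TTheory GRing.Theory Num.Theory.
Local Open Scope ring_scope.

Section Sequences.
Variable R : realType.
Implicit Types (a b : nat -> R) (r : R).

Lemma linf0 : in_l_infty (fun _ => 0 : R).
Proof. by exists 0 => k; rewrite normr0. Qed.

Lemma linfD a b : in_l_infty a -> in_l_infty b -> in_l_infty (fun n => a n + b n).
Proof.
move=> [Ma ha] [Mb hb]; exists (Ma + Mb) => n.
exact: le_trans (ler_normD _ _) (lerD (ha n) (hb n)).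
Qed.

Lemma linfZ r a : in_l_infty a -> in_l_infty (fun n => r * a n).
Proof. by move=> [M h]; exists (`|r| * M) => n; rewrite normrM ler_wpM2l. Qed.

Lemma linf_sum (I : Type) (s : seq I) (f : I -> nat -> R) :
  (forall v, in_l_infty (f v)) -> in_l_infty (fun k => \sum_(v <- s) f v k).
Proof.
move=> hf; elim: s => [|v s IH].
  by under eq_fun do rewrite big_nil; exact: linf0.
by under eq_fun do rewrite big_cons; exact: linfD.
Qed.

Lemma cesD a b : in_ces_infty a -> in_ces_infty b -> in_ces_infty (fun n => a n + b n).
Proof.
move=> [Ma ha] [Mb hb]; exists (Ma + Mb) => n.
apply: le_trans (lerD (ha n) (hb n)).
rewrite /ces_avg -mulrDr ler_wpM2l ?invr_ge0 // -big_split /=.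
by apply: ler_sum => k _; exact: ler_normD.
Qed.

Lemma cesZ r a : in_ces_infty a -> in_ces_infty (fun n => r * a n).
Proof.
move=> [M h]; exists (`|r| * M) => n.
have -> : ces_avg (fun n => r * a n) n = `|r| * ces_avg a n.
  rewrite /ces_avg [RHS]mulrCA ; congr (_ * _); rewrite mulr_sumr.
  by apply: eq_bigr => k _; rewrite normrM.
exact: ler_wpM2l.
Qed.

Lemma ces_avg_le_norm a n : in_ces_infty a -> ces_avg a n <= ces_norm a.
Proof.
by move=> [M h]; apply: ub_le_sup; [exists M => _ [k _ <-] | exists n].
Qed.

Lemma ces_norm_le a B : (forall n, ces_avg a n <= B) -> ces_norm a <= B.
Proof. by move=> h; apply: ge_sup; [exists (ces_avg a 0), 0 | move=> _ [k _ <-]]. Qed.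

Lemma norm_le_linf_norm a n : in_l_infty a -> `|a n| <= linf_norm a.
Proof.
by move=> [M h]; apply: ub_le_sup; [exists M => _ [k _ <-] | exists n].
Qed.

Lemma linf_norm_le a B : (forall n, `|a n| <= B) -> linf_norm a <= B.
Proof. by move=> h; apply: ge_sup; [exists `|a 0|, 0 | move=> _ [k _ <-]]. Qed.

Lemma ces_avg_delta n j r :
  ces_avg (fun k => if k == j then r else 0) n <= `|r| / j.+1%:R.
Proof.
rewrite /ces_avg mulrC; have [ltjn | lenj] := ltnP j n.+1.
  rewrite (bigD1 (Ordinal ltjn)) //= eqxx big1 ?addr0 => [|k].
    by rewrite ler_wpM2l // lef_pV2 ?posrE // ler_nat.
  by rewrite -val_eqE /= => /negbTE ->; rewrite normr0.
rewrite big1 ?mul0r ?divr_ge0 // => k _.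
by rewrite (ltn_eqF (leq_trans (ltn_ord k) lenj)) normr0.
Qed.

Lemma sum_shift_le_ces_norm a N : in_ces_infty a ->
  \sum_(i < N) `|a (N + i)%N| <= 2 * N%:R * ces_norm a.
Proof.
move=> ha; case: N => [|n]; first by rewrite big_ord0 mulr0 mul0r.
apply: le_trans (_ : \sum_(k < n.+1 + n.+1) `|a k| <= _).
  by rewrite big_split_ord /= ler_wpDl ?sumr_ge0.
have -> : \sum_(k < n.+1 + n.+1) `|a k| = (n.+1 + n.+1)%:R * ces_avg a (n.+1 + n).
  by rewrite /ces_avg -addnS mulrA mulfV ?mul1r // pnatr_eq0 addn_eq0.
rewrite (_ : (n.+1 + n.+1)%:R = 2 * n.+1%:R :> R); last by rewrite natrD; ring.
by rewrite ler_wpM2l ?mulr_ge0 ?ces_avg_le_norm.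
Qed.

End Sequences.

Section Khintchine.
Variable R : realType.
Implicit Types (a e : nat -> R) (n : nat).

Definition update e n (s : R) : nat -> R := fun i => if i == n then s else e i.

Fixpoint sign_vectors n : seq (nat -> R) :=
  if n is n'.+1 then
    [seq update e n' 1 | e <- sign_vectors n'] ++
    [seq update e n' (-1) | e <- sign_vectors n']
  else [:: fun _ => 1].

Lemma big_sign_vectorsS n (F : (nat -> R) -> R) :
  \sum_(e <- sign_vectors n.+1) F e =
  \sum_(e <- sign_vectors n) (F (update e n 1) + F (update e n (-1))).
Proof. by rewrite /= big_cat !big_map big_split. Qed.

Lemma sum_sign_vectors_const n (c : R) : \sum_(e <- sign_vectors n) c = 2 ^+ n * c.
Proof.
elim: n => [|n IH]; first by rewrite big_seq1 expr0 mul1r.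
by rewrite big_sign_vectorsS big_split /= IH exprS; ring.
Qed.

Lemma sum_sign_vectors_le n (F : (nat -> R) -> R) (K : R) :
  (forall e, (forall i, `|e i| <= 1) -> F e <= K) ->
  \sum_(e <- sign_vectors n) F e <= 2 ^+ n * K.
Proof.
elim: n F => [|n IH] F hF.
  by rewrite big_seq1 expr0 mul1r; apply: hF => i; rewrite normr1.
have update_le1 s e : `|s| <= 1 -> (forall i, `|e i| <= 1) ->
    forall i, `|update e n s i| <= 1.
  by move=> hs he i; rewrite /update; case: (i == n).
rewrite big_sign_vectorsS big_split (_ : 2 ^+ n.+1 * K = 2 ^+ n * K + 2 ^+ n * K);
  last by rewrite exprS; ring.
apply: lerD; apply: IH => e he; apply: hF; apply: update_le1 => //.
  by rewrite normr1.
by rewrite normrN normr1.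
Qed.

Definition rademacher_sum n a e : R := \sum_(i < n) e i * a i.

Lemma rademacher_sum0 a e : rademacher_sum 0 a e = 0.
Proof. by rewrite /rademacher_sum big_ord0. Qed.

Lemma rademacher_sum_update n a e s :
  rademacher_sum n.+1 a (update e n s) = rademacher_sum n a e + s * a n.
Proof.
rewrite /rademacher_sum big_ord_recr /= /update eqxx; congr (_ + _).
by apply: eq_bigr => i _; rewrite (ltn_eqF (ltn_ord i)).
Qed.

Definition sum_sqr n a : R := \sum_(i < n) a i ^+ 2.

Lemma sum_sqr_ge0 n a : 0 <= sum_sqr n a.
Proof. by apply: sumr_ge0 => i _; exact: sqr_ge0. Qed.

Lemma sum_sqrS n a : sum_sqr n.+1 a = sum_sqr n a + a n ^+ 2.
Proof. exact: big_ord_recr. Qed.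

Lemma sum_rademacher_sqr n a :
  \sum_(e <- sign_vectors n) rademacher_sum n a e ^+ 2 = 2 ^+ n * sum_sqr n a.
Proof.
elim: n => [|n IH].
  by rewrite big_seq1 rademacher_sum0 /sum_sqr big_ord0; ring.
rewrite big_sign_vectorsS sum_sqrS exprS.
under eq_bigr do rewrite !rademacher_sum_update.
rewrite (eq_bigr (fun e => 2 * rademacher_sum n a e ^+ 2 + 2 * a n ^+ 2)).
  by rewrite big_split /= -!mulr_sumr IH sum_sign_vectors_const; ring.
by move=> e _; ring.
Qed.

Lemma sum_rademacher_exp4_le n a :
  \sum_(e <- sign_vectors n) rademacher_sum n a e ^+ 4 <= 3 * 2 ^+ n * sum_sqr n a ^+ 2.
Proof.
elim: n => [|n IH].
  by rewrite big_seq1 rademacher_sum0 /sum_sqr big_ord0; lra.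
rewrite big_sign_vectorsS sum_sqrS exprS.
under eq_bigr do rewrite !rademacher_sum_update.
rewrite (eq_bigr (fun e => 2 * rademacher_sum n a e ^+ 4 +
   12 * a n ^+ 2 * rademacher_sum n a e ^+ 2 + 2 * a n ^+ 4)); last by move=> e _; ring.
rewrite !big_split /= -!mulr_sumr sum_rademacher_sqr sum_sign_vectors_const.
have hP : 0 <= (2 : R) ^+ n by rewrite exprn_ge0.
have hq := sum_sqr_ge0 n a; have hb := sqr_ge0 (a n).
move: IH hP hq hb; set P := 2 ^+ n; set q := sum_sqr n a; set b := a n ^+ 2.
rewrite (_ : a n * (a n * (a n * (P * a n))) = P * b ^+ 2); last by rewrite /b; ring.
move=> IH hP hq hb; clearbody P q b.
have h1 : 0 <= P * q * b by apply: mulr_ge0 => //; apply: mulr_ge0.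
have h2 : 0 <= P * b ^+ 2 by apply: mulr_ge0; rewrite ?sqr_ge0.
nra.
Qed.

(* With [l] tuned to the second moment, the two moment identities above turn
   this pointwise bound into a lower bound for the first moment. *)
Lemma quartic_minorant_le_norm (l s : R) : 0 <= l ->
  (3 * l * s ^+ 2 - l ^+ 3 * s ^+ 4) / 2 <= `|s|.
Proof.
move=> hl.
rewrite (_ : s ^+ 4 = (s ^+ 2) ^+ 2); last by rewrite -exprM.
rewrite -real_normK ?num_real //; have := normr_ge0 s; move: `|s| => x hx.
have hx2 : 0 <= l * x + 2 by nra.
have : 0 <= x * (l * x - 1) ^+ 2 * (l * x + 2).
  by apply: mulr_ge0 => //; apply: mulr_ge0; rewrite ?sqr_ge0.
nra.
Qed.

Definition sum_norm n a : R := \sum_(i < n) `|a i|.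

Lemma sum_norm_ge0 n a : 0 <= sum_norm n a.
Proof. exact: sumr_ge0. Qed.

Lemma sum_norm_sqr_le n a : sum_norm n a ^+ 2 <= n%:R * sum_sqr n a.
Proof.
elim: n => [|n IH]; first by rewrite /sum_norm /sum_sqr !big_ord0; lra.
rewrite /sum_norm big_ord_recr /= -/(sum_norm n a) sum_sqrS -natr1.
rewrite -(real_normK (num_real (a n))).
have hp := sum_norm_ge0 n a; have hq := sum_sqr_ge0 n a; have hx := normr_ge0 (a n).
move: IH hp hq hx; set p := sum_norm n a; set q := sum_sqr n a; set x := `|a n|.
move=> IH hp hq hx.
have AMGM : 2 * p * x <= q + n%:R * x ^+ 2.
  have : p ^+ 2 * x ^+ 2 <= n%:R * q * x ^+ 2 by rewrite ler_wpM2r ?sqr_ge0.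
  have : 0 <= (q - n%:R * x ^+ 2) ^+ 2 := sqr_ge0 _.
  have : 0 <= q + n%:R * x ^+ 2 by rewrite addr_ge0 ?mulr_ge0 ?sqr_ge0.
  nra.
nra.
Qed.

Lemma khintchine_l1 n a :
  2 ^+ n * sum_norm n a <=
  Num.sqrt (3 * n%:R) * \sum_(e <- sign_vectors n) `|rademacher_sum n a e|.
Proof.
have hq := sum_sqr_ge0 n a; have hp := sum_norm_ge0 n a.
have hCS := sum_norm_sqr_le n a.
have hD := sqrtr_ge0 (3 * n%:R : R).
have hP : 0 < (2 : R) ^+ n by rewrite exprn_gt0.
have [hq0|hq0] := ltrP 0 (sum_sqr n a); last first.
  have q0 : sum_sqr n a = 0 by apply/eqP; rewrite eq_le hq0 hq.
  have -> : sum_norm n a = 0.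
    by apply/eqP; rewrite -sqrf_eq0 eq_le sqr_ge0 andbT -(mulr0 n%:R) -q0.
  by rewrite mulr0 mulr_ge0 ?sumr_ge0.
set l := (Num.sqrt (3 * sum_sqr n a))^-1.
have hl : 0 <= l by rewrite invr_ge0 sqrtr_ge0.
have hl2 : l ^+ 2 * sum_sqr n a = 3^-1.
  by rewrite /l exprVn sqr_sqrtr; [field; lra | lra].
have first_moment : 2 ^+ n * (l * sum_sqr n a) <=
    \sum_(e <- sign_vectors n) `|rademacher_sum n a e|.
  apply: le_trans (_ : \sum_(e <- sign_vectors n) (3 * l * rademacher_sum n a e ^+ 2 -
      l ^+ 3 * rademacher_sum n a e ^+ 4) / 2 <= _); last first.
    by apply: ler_sum => e _; exact: quartic_minorant_le_norm.
  rewrite -mulr_suml big_split /= sumrN -!mulr_sumr sum_rademacher_sqr.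
  have := ler_wpM2l (exprn_ge0 3 hl) (sum_rademacher_exp4_le n a).
  rewrite (_ : l ^+ 3 * (3 * 2 ^+ n * sum_sqr n a ^+ 2) =
      2 ^+ n * (l * sum_sqr n a) * (3 * (l ^+ 2 * sum_sqr n a))); last by ring.
  rewrite hl2 mulfV ?mulr1; [lra | by rewrite pnatr_eq0].
apply: le_trans (ler_wpM2l hD first_moment).
rewrite mulrCA; apply: ler_wpM2l; first exact: ltW.
have hy : 0 <= Num.sqrt (3 * n%:R) * (l * sum_sqr n a) by rewrite !mulr_ge0.
have : (Num.sqrt (3 * n%:R) * (l * sum_sqr n a)) ^+ 2 = n%:R * sum_sqr n a.
  rewrite !exprMn sqr_sqrtr ?mulr_ge0 //.
  rewrite (_ : l ^+ 2 * sum_sqr n a ^+ 2 = (l ^+ 2 * sum_sqr n a) * sum_sqr n a); last by ring.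
  by rewrite hl2; field.
nra.
Qed.

End Khintchine.

Section LinearFunctional.
Variables (R : realType) (t : (nat -> R) -> R).
Hypothesis tD : forall y z, in_l_infty y -> in_l_infty z ->
  t (fun k => y k + z k) = t y + t z.
Hypothesis tZ : forall r y, in_l_infty y -> t (fun k => r * y k) = r * t y.

Lemma linear_functional_sum (I : Type) (s : seq I) (c : I -> R) (f : I -> nat -> R) :
  (forall v, in_l_infty (f v)) ->
  t (fun k => \sum_(v <- s) c v * f v k) = \sum_(v <- s) c v * t (f v).
Proof.
move=> hf; elim: s => [|v s IH].
  rewrite big_nil (_ : (fun k => _) = (fun k => 0 * (fun _ => 0 : R) k)).
    by rewrite tZ ?mul0r //; exact: linf0.
  by apply: funext => k; rewrite big_nil mul0r.
under eq_fun do rewrite big_cons.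
rewrite tD ?tZ ?IH ?big_cons //; first exact: linfZ.
by apply: linf_sum => w; exact: linfZ.
Qed.

End LinearFunctional.

Section DiagonalFactorization.
Variables (R : realType) (N : nat) (t : nat -> (nat -> R) -> R) (u : nat -> nat -> R).
Variables (K C : R).
Hypotheses (K_gt0 : 0 < K) (C_gt0 : 0 < C).
Hypothesis tD : forall i y z, in_l_infty y -> in_l_infty z ->
  t i (fun k => y k + z k) = t i y + t i z.
Hypothesis tZ : forall i r y, in_l_infty y -> t i (fun k => r * y k) = r * t i y.
Hypothesis t_bounded : forall y B, (forall k, `|y k| <= B) ->
  \sum_(i < N) `|t i y| <= K * B.
Hypothesis u_bounded : forall i k, `|u i k| <= C.
Hypothesis t_u_diag : forall i, (i < N)%N -> t i (u i) = 1.

(* The values of the [u i] are rounded down to a grid of mesh [delta] on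
   [[-C, C]]; the level sets of the rounded family [(u i)_(i < N)] are finitely
   many, and their indicators reduce the problem to a finite-dimensional one. *)
Let delta : R := (2 * K)^-1.
Let delta_gt0 : 0 < delta. Proof. by rewrite invr_gt0 mulr_gt0. Qed.
Let m := (Num.truncn (2 * C / delta)).+1.
Let level (x : R) : 'I_m := inord (Num.truncn ((x + C) / delta)).
Let level_value (j : 'I_m) : R := j%:R * delta - C.
Let pattern := {ffun 'I_N -> 'I_m}.
Let pattern_of k : pattern := [ffun i : 'I_N => level (u i k)].
Let indicator (v : pattern) (k : nat) : R := (pattern_of k == v)%:R.

Let sum_indicator (c : pattern -> R) k :
  \sum_(v : pattern) c v * indicator v k = c (pattern_of k).
Proof.
rewrite (bigD1 (pattern_of k)) //= /indicator eqxx mulr1 big1 ?addr0 // => v hv.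
by rewrite eq_sym (negbTE hv) mulr0.
Qed.

Let linf_indicator v : in_l_infty (indicator v).
Proof. by exists 1 => k; rewrite /indicator; case: eqP; rewrite ?normr1 ?normr0. Qed.

Let level_approx x : `|x| <= C -> `|x - level_value (level x)| <= delta.
Proof.
rewrite ler_norml => /andP [hx1 hx2].
set z := (x + C) / delta.
have hz : 0 <= z by apply: divr_ge0; [lra | exact: ltW].
have hzm : (Num.truncn z < m)%N.
  by rewrite ltnS le_truncn // /z ler_pM2r ?invr_gt0 ?mulr_gt0 //; lra.
rewrite /level_value /level inordK //.
have /andP [h1 h2] := truncn_itv hz.
have e1 : (Num.truncn z)%:R * delta <= x + C by rewrite -ler_pdivlMr.
have e2 : x + C < ((Num.truncn z)%:R + 1) * delta by rewrite -ltr_pdivrMr // natr1.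
by rewrite ler_norml; apply/andP; split; lra.
Qed.

Let level_value_bounded j : `|level_value j| <= C.
Proof.
have hj : (j%:R : R) <= 2 * C / delta.
  apply: le_trans (_ : (Num.truncn (2 * C / delta))%:R <= _).
    by rewrite ler_nat -ltnS ltn_ord.
  by rewrite truncn_le // divr_ge0 ?mulr_ge0 ?ltW.
have h1 : j%:R * delta <= 2 * C by rewrite -ler_pdivlMr.
have h2 : 0 <= (j%:R : R) * delta by apply: mulr_ge0 => //; exact: ltW.
by rewrite /level_value ler_norml; apply/andP; split; lra.
Qed.

Let t_sum i (c : pattern -> R) :
  t i (fun k => \sum_(v : pattern) c v * indicator v k) =
  \sum_(v : pattern) c v * t i (indicator v).
Proof. exact: (linear_functional_sum (tD i) (tZ i)). Qed.

(* Split [u i] into its rounding, a combination of indicators with coefficients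
   at most [C], and an error of sup norm at most [delta] costing [K * delta]. *)
Let one_le_level_mass (i : 'I_N) :
  1 <= C * \sum_(v : pattern) `|t i (indicator v)| + 2^-1.
Proof.
pose f k := level_value (level (u i k)).
pose e k := u i k - f k.
have e_le k : `|e k| <= delta by exact: level_approx.
have linf_f : in_l_infty f by exists C => k; exact: level_value_bounded.
have f_sum : f = (fun k => \sum_(v : pattern) level_value (v i) * indicator v k).
  by apply: funext => k; rewrite sum_indicator ffunE.
have : t i (u i) = t i f + t i e.
  by rewrite -tD //; [congr (t i); apply: funext => k; rewrite /e; ring | exists delta].
rewrite t_u_diag // f_sum t_sum => one_split.
have main_le : \sum_(v : pattern) level_value (v i) * t i (indicator v) <=
    C * \sum_(v : pattern) `|t i (indicator v)|.
  apply: le_trans (ler_norm _) _; apply: le_trans (ler_norm_sum _ _ _) _.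
  rewrite mulr_sumr; apply: ler_sum => v _.
  by rewrite normrM ler_wpM2r ?level_value_bounded.
have err_le : `|t i e| <= 2^-1.
  have -> : 2^-1 = K * delta by rewrite /delta invfM mulrCA mulfV ?mulr1 ?gt_eqF.
  apply: le_trans (t_bounded e_le).
  by rewrite (bigD1 i) //= ler_wpDr ?sumr_ge0.
have := ler_norm (t i e); lra.
Qed.

(* The signs of the inner sums define a sequence [y] with [|y| <= 1], and the
   sum is then [\sum_i e i * t i y], bounded by [K]. *)
Let sum_rademacher_level_le (e : nat -> R) : (forall i, `|e i| <= 1) ->
  \sum_(v : pattern) `|rademacher_sum N (fun i => t i (indicator v)) e| <= K.
Proof.
move=> e_le1.
pose X v := rademacher_sum N (fun i => t i (indicator v)) e.
pose s v : R := if 0 <= X v then 1 else -1.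
have normX v : `|X v| = s v * X v.
  rewrite /s; case: ifP => h; first by rewrite mul1r ger0_norm.
  by rewrite mulN1r ltr0_norm // ltNge h.
pose y k := \sum_(v : pattern) s v * indicator v k.
have y_le1 k : `|y k| <= 1.
  by rewrite /y sum_indicator /s; case: ifP; rewrite ?normrN normr1.
have -> : \sum_(v : pattern) `|X v| = \sum_(i < N) e i * t i y.
  under eq_bigr do rewrite normX.
  rewrite /X /rademacher_sum; under eq_bigr do rewrite mulr_sumr.
  rewrite exchange_big /=; apply: eq_bigr => i _.
  by rewrite t_sum mulr_sumr; apply: eq_bigr => v _; ring.
apply: le_trans (_ : \sum_(i < N) `|t i y| <= _); last first.
  by rewrite -[K]mulr1; exact: t_bounded.
apply: ler_sum => i _; apply: le_trans (ler_norm _) _.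
by rewrite normrM ler_piMl.
Qed.

Let sum_level_mass_le :
  \sum_(i < N) \sum_(v : pattern) `|t i (indicator v)| <= Num.sqrt (3 * N%:R) * K.
Proof.
rewrite exchange_big /= -(ler_pM2l (exprn_gt0 N (ltr0Sn R 1))) mulr_sumr.
apply: (@le_trans _ _ (\sum_(v : pattern) Num.sqrt (3 * N%:R) *
  \sum_(e <- sign_vectors R N) `|rademacher_sum N (fun i => t i (indicator v)) e|)).
  by apply: ler_sum => v _; exact: khintchine_l1.
rewrite -mulr_sumr exchange_big /= mulrCA ler_wpM2l ?sqrtr_ge0 //.
exact: sum_sign_vectors_le sum_rademacher_level_le.
Qed.

Lemma diagonal_factorization_bound : N%:R <= 12 * C ^+ 2 * K ^+ 2.
Proof.
have mass_ge : N%:R / 2 <= C * \sum_(i < N) \sum_(v : pattern) `|t i (indicator v)|.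
  have : \sum_(i < N) (1 : R) <=
      \sum_(i < N) (C * \sum_(v : pattern) `|t i (indicator v)| + 2^-1).
    by apply: ler_sum => i _; exact: one_le_level_mass.
  rewrite big_split /= -mulr_sumr !sumr_const card_ord -[2^-1 *+ N]mulr_natr; lra.
have [-> | N_gt0] := posnP N.
  by apply: mulr_ge0; [apply: mulr_ge0 |]; rewrite ?sqr_ge0.
have hD := sqrtr_ge0 (3 * N%:R : R).
have hD2 : Num.sqrt (3 * N%:R) ^+ 2 = 3 * N%:R :> R by rewrite sqr_sqrtr ?mulr_ge0.
have := ler_wpM2l (ltW C_gt0) sum_level_mass_le.
move: mass_ge hD hD2; set D := Num.sqrt _; set P := \sum_(i < N) _ => mass_ge hD hD2 hP.
have hN : N%:R <= 2 * C * D * K by lra.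
have := ler_pM (ler0n _ N) (ler0n _ N) hN hN.
rewrite (_ : 2 * C * D * K * (2 * C * D * K) = 4 * C ^+ 2 * K ^+ 2 * D ^+ 2); last by ring.
rewrite hD2 (_ : _ * (3 * N%:R) = N%:R * (12 * C ^+ 2 * K ^+ 2)); last by ring.
by rewrite ler_pM2l ?ltr0n.
Qed.


End DiagonalFactorization.

Lemma ces_linf_isomorphism_inverse (R : realType) (T : (nat -> R) -> nat -> R) :
  ces_linf_isomorphism T -> exists (S : (nat -> R) -> nat -> R) (c : R), [/\ 0 < c,
    forall y, in_l_infty y -> in_ces_infty (S y) /\ T (S y) = y,
    forall y z, in_l_infty y -> in_l_infty z ->
      S (fun k => y k + z k) = (fun k => S y k + S z k),
    forall r y, in_l_infty y -> S (fun k => r * y k) = (fun k => r * S y k) &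
    forall y B, (forall k, `|y k| <= B) -> ces_norm (S y) <= B / c].
Proof.
move=> [_ [T_add [T_scale [T_inj [T_onto [c [C [c_gt0 [_ T_norm]]]]]]]]].
have /choice [S S_inv] : forall y, exists a, in_l_infty y -> in_ces_infty a /\ T a = y.
  move=> y; have [/T_onto [a ha <-]|not_linf] := pselect (in_l_infty y).
    by exists a.
  by exists y => /not_linf.
exists S, c; split => // [y z hy hz | r y hy | y B hy].
- have [[Sy_ces TSy] [Sz_ces TSz]] := (S_inv y hy, S_inv z hz).
  have [Syz_ces TSyz] := S_inv _ (linfD hy hz).
  by apply: T_inj => //; [exact: cesD | rewrite TSyz T_add // TSy TSz].
- have [Sy_ces TSy] := S_inv y hy; have [Sry_ces TSry] := S_inv _ (linfZ r hy).
  by apply: T_inj => //; [exact: cesZ | rewrite TSry T_scale // TSy].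
- have [Sy_ces TSy] := S_inv y (ex_intro _ B hy).
  rewrite ler_pdivlMr // mulrC; apply: le_trans (proj1 (T_norm _ Sy_ces)) _.
  by rewrite TSy linf_norm_le.
Qed.

Theorem corollary4 (R : realType) :
  ~ exists T : (nat -> R) -> (nat -> R), ces_linf_isomorphism T.
Proof.
move=> [T isoT]; have [S [c [c_gt0 S_inv S_add S_scale S_bounded]]] :=
  ces_linf_isomorphism_inverse isoT.
case: isoT => T_linf [_ [_ [T_inj [_ [c0 [C [_ [C_gt0 T_norm]]]]]]]].
have K_gt0 : 0 < 2 / c by rewrite divr_gt0.
pose N := (Num.truncn (12 * C ^+ 2 * (2 / c) ^+ 2)).+1.
pose t i y := S y (N + i)%N / N%:R.
pose x i k : R := if k == (N + i)%N then N%:R else 0.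
have x_ces_le1 i n : ces_avg (x i) n <= 1.
  apply: le_trans (ces_avg_delta _ _ _) _.
  by rewrite normr_nat ler_pdivrMr ?ltr0n // mul1r ler_nat; apply/leqW/leq_addr.
have x_ces i : in_ces_infty (x i) by exists 1.
have := truncnS_gt (12 * C ^+ 2 * (2 / c) ^+ 2); rewrite -/N ltNge => /negP; apply.
apply: (@diagonal_factorization_bound R N t (fun i => T (x i)) (2 / c) C K_gt0 C_gt0).
- by move=> i y z hy hz; rewrite /t S_add // mulrDl.
- by move=> i r y hy; rewrite /t S_scale // mulrA.
- move=> y B hy; have [Sy_ces _] := S_inv y (ex_intro _ B hy).
  under eq_bigr do rewrite normrM normfV normr_nat.
  rewrite -mulr_suml ler_pdivrMr ?ltr0n //.
  apply: le_trans (sum_shift_le_ces_norm _ Sy_ces) _.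
  rewrite (_ : 2 / c * B * N%:R = 2 * N%:R * (B / c)); last by ring.
  by rewrite ler_wpM2l ?mulr_ge0 ?S_bounded.
- move=> i k; apply: le_trans (norm_le_linf_norm _ (T_linf _ (x_ces i))) _.
  apply: le_trans (proj2 (T_norm _ (x_ces i))) _.
  by rewrite -[X in _ <= X]mulr1 ler_pM2l // ces_norm_le.
- move=> i _; have [STx_ces TSTx] := S_inv _ (T_linf _ (x_ces i)).
  by rewrite /t (T_inj _ _ STx_ces (x_ces i) TSTx) /x eqxx mulfV ?pnatr_eq0.
Qed.
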